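(* Let $0\le\beta\le1$ and let $f\in\mathcal{A}_{\beta}$ with $f(z)=z+\sum_{n=2}^\infty a_nz^n$, and let $f^{-1}(w)=w+\sum_{n=2}^\infty A_nw^n$ be the inverse of $f$ near $0$, so that $A_2=-a_2$ and $A_3=-a_3+2a_2^2$. Then \[ |A_2|\le\frac{2}{2-\beta}\qquad\text{and}\qquad |A_3|\le\frac{2(8-4\beta-\beta^2)}{(2-\beta)^2(3-2\beta)}. \] Both bounds are sharp (attained by some $f\in\mathcal{A}_\beta$).
   Context: $\mathbb{D}$ is the open unit disk; $\mathcal{A}$ is the class of holomorphic $f$ on $\mathbb{D}$ with $f(0)=0$, $f'(0)=1$. For $\beta\in[0,1]$, $\mathcal{A}_{\beta}=\{f\in\mathcal{A}: \operatorname{Re}\big(\beta\, f(z)/z+(1-\beta)f'(z)\big)>0 \text{ for all } z\in\mathbb{D}\}$. The inverse coefficients $A_n$ are the Taylor coefficients of the local inverse $f^{-1}$ at $0$ (which exists since $f'(0)=1$). *)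

From Stdlib Require Import Reals.
From Coquelicot Require Import Coquelicot.
Open Scope R_scope.

Definition cderiv (f : C -> C) (z d : C) : Prop :=
  is_derive (K := C_AbsRing) (V := C_NormedModule) f z d.

Definition in_disk (z : C) : Prop := Cmod z < 1.

Definition classA (f : C -> C) : Prop :=
  (forall z, in_disk z -> exists d, cderiv f z d) /\
  f (RtoC 0) = RtoC 0 /\ cderiv f (RtoC 0) (RtoC 1).

(* At z = 0 the quotient f(z)/z is understood as its limit f'(0) = 1, so
   the expression equals 1 > 0 there automatically; we impose the
   condition for z <> 0 (where f(z)/z is literally defined). *)
Definition classA_beta (beta : R) (f : C -> C) : Prop :=
  classA f /\
  forall z d, in_disk z -> z <> RtoC 0 -> cderiv f z d ->
    0 < Re (Cplus (Cmult (RtoC beta) (Cdiv (f z) z))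
                  (Cmult (RtoC (1 - beta)) d)).

Definition taylor_on_disk (f : C -> C) (a : nat -> C) : Prop :=
  forall z, in_disk z -> is_pseries (K := C_AbsRing) (V := C_NormedModule) a z (f z).

Definition invA2 (a : nat -> C) : C := Copp (a 2%nat).
Definition invA3 (a : nat -> C) : C :=
  Cplus (Copp (a 3%nat)) (Cmult (RtoC 2) (Cmult (a 2%nat) (a 2%nat))).

(* Write c_n = (n + 1 - n beta) a_(n+1): these are the Taylor coefficients of
   p(z) = beta f(z)/z + (1 - beta) f'(z), so that c_0 = 1 and Re p > 0 on the disk. Since
   a_2 = c_1/(2 - beta) and a_3 = c_2/(3 - 2 beta), both bounds follow from the
   Caratheodory-type inequality |c_2 - c_1^2/2| <= 2 - |c_1|^2/2, which also gives |c_1| <= 2.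

   To prove it, sample Re p >= 0 on the circle |z| = r at the N-th roots of unity w_k. The
   weights Re p(r w_k) have moments sum_k Re p(r w_k) conj(w_k)^j equal to N r^j c_j/2
   (N for j = 0) up to the aliasing of the coefficients of index >= N - 2, which vanishes as
   N -> oo. With m = r c_1/2, the inequality
   |sum_k Re p(r w_k) (conj w_k - m)^2| <= sum_k Re p(r w_k) |conj w_k - m|^2 then gives
   |r^2 c_2/2 - m^2| <= 1 - |m|^2; let N -> oo and r -> 1.

   Equality holds when p(z) = (1 + z)/(1 - z), i.e. a_(n+1) = 2/(n + 1 - n beta) for n >= 1. *)

From Stdlib Require Import Reals Lra Lia Psatz ClassicalEpsilon.
From Coquelicot Require Import Coquelicot.
Open Scope R_scope.

(** * Complex series *)

Lemma Cconj_RtoC (x : R) : Cconj x = x.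
Proof. apply injective_projections; simpl; ring. Qed.

Lemma Cmod_triangle_inv (x y : C) : Rabs (Cmod x - Cmod y) <= Cmod (x - y).
Proof.
  pose proof (Cmod_triangle (x - y) y) as H1. pose proof (Cmod_triangle x (- (x - y))) as H2.
  rewrite Cmod_opp in H2. replace (x - y + y)%C with x in H1 by ring.
  replace (x + - (x - y))%C with y in H2 by ring.
  apply Rabs_le. lra.
Qed.

Definition is_Cseries (u : nat -> C) (l : C) : Prop :=
  is_series (K := C_AbsRing) (V := C_NormedModule) u l.

Lemma is_Cseries_Cmod (u : nat -> C) (l : C) : is_Cseries u l <->
  forall eps, 0 < eps -> exists N, forall n, (N <= n)%nat -> Cmod (sum_n u n - l) < eps.
Proof.
  split.
  - intros H eps Heps.
    assert (Hs : 0 < sqrt 2) by (apply sqrt_lt_R0; lra).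
    destruct (proj1 (filterlim_locally _ _) H
                (mkposreal (eps / sqrt 2) (Rdiv_lt_0_compat _ _ Heps Hs))) as [N HN].
    exists N. intros n Hn.
    pose proof (C_NormedModule_mixin_compat2 _ _ _ (HN n Hn)) as Hb. simpl in Hb.
    replace eps with (sqrt 2 * (eps / sqrt 2)) by (field; lra). exact Hb.
  - intros H. apply filterlim_locally. intros eps.
    destruct (H eps (cond_pos eps)) as [N HN].
    exists N. intros n Hn. apply C_NormedModule_mixin_compat1, HN, Hn.
Qed.

Lemma is_Cseries_unique (u : nat -> C) (l1 l2 : C) : is_Cseries u l1 -> is_Cseries u l2 -> l1 = l2.
Proof. apply filterlim_locally_unique. Qed.

Lemma is_Cseries_ext (u v : nat -> C) (l : C) :
  (forall n, u n = v n) -> is_Cseries u l -> is_Cseries v l.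
Proof. apply is_series_ext. Qed.

Lemma is_Cseries_plus (u v : nat -> C) (l m : C) :
  is_Cseries u l -> is_Cseries v m -> is_Cseries (fun n => u n + v n)%C (l + m).
Proof. apply (is_series_plus u v l m). Qed.

Lemma is_Cseries_minus (u v : nat -> C) (l m : C) :
  is_Cseries u l -> is_Cseries v m -> is_Cseries (fun n => u n - v n)%C (l - m).
Proof. apply (is_series_minus u v l m). Qed.

Lemma is_Cseries_scal (x : C) (u : nat -> C) (l : C) :
  is_Cseries u l -> is_Cseries (fun n => x * u n)%C (x * l).
Proof. apply (is_series_scal x u l). Qed.

Lemma is_Cseries_incr_1 (u : nat -> C) (l : C) :
  is_Cseries u l -> is_Cseries (fun n => u (S n)) (l - u O).
Proof.
  intros H. apply is_series_incr_1.
  match goal with |- is_series _ ?x => replace x with l; [exact H|] end.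
  change (l = l - u O + u O)%C. ring.
Qed.

Lemma is_Cseries_conj (u : nat -> C) (l : C) :
  is_Cseries u l -> is_Cseries (fun n => Cconj (u n)) (Cconj l).
Proof.
  assert (Hsum : forall n, sum_n (fun k => Cconj (u k)) n = Cconj (sum_n u n)).
  { induction n as [|n IH].
    - now rewrite !sum_O.
    - rewrite !sum_Sn, IH. apply eq_sym, Cplus_conj. }
  rewrite !is_Cseries_Cmod. intros H eps Heps.
  destruct (H eps Heps) as [N HN]. exists N. intros n Hn.
  rewrite Hsum, <- Cminus_conj, Cmod_conj. auto.
Qed.

Lemma is_Cseries_Cmod_le (u : nat -> C) (l : C) (b : nat -> R) (B : R) :
  is_Cseries u l -> (forall n, Cmod (u n) <= b n) -> is_series b B -> Cmod l <= B.
Proof.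
  intros Hu Hb HB.
  assert (Hs : forall n, Cmod (sum_n u n) <= sum_n b n).
  { induction n as [|n IH].
    - rewrite !sum_O. apply Hb.
    - rewrite !sum_Sn. eapply Rle_trans; [apply Cmod_triangle|].
      apply Rplus_le_compat; auto. }
  assert (Hl : is_lim_seq (fun n => Cmod (sum_n u n)) (Cmod l)).
  { apply is_lim_seq_spec. intros eps.
    destruct (proj1 (is_Cseries_Cmod u l) Hu eps (cond_pos eps)) as [N HN].
    exists N. intros n Hn. eapply Rle_lt_trans; [|apply (HN n Hn)].
    apply Cmod_triangle_inv. }
  exact (is_lim_seq_le _ _ (Cmod l) B Hs Hl HB).
Qed.

Lemma ex_Cseries_le (u : nat -> C) (b : nat -> R) :
  (forall n, Cmod (u n) <= b n) -> ex_series b -> exists l, is_Cseries u l.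
Proof. intros Hb HB. apply (ex_series_le (V := C_CompleteNormedModule) u b Hb HB). Qed.

Lemma upper_bound_upto (f : nat -> R) (N : nat) : exists M, forall n, (n <= N)%nat -> f n <= M.
Proof.
  induction N as [|N [M HM]].
  - exists (f O). intros n Hn. replace n with O by lia. lra.
  - exists (Rmax M (f (S N))). intros n Hn.
    destruct (Nat.eq_dec n (S N)) as [->|Hne]; [apply Rmax_r|].
    eapply Rle_trans; [apply HM; lia | apply Rmax_l].
Qed.

Lemma is_Cseries_bounded (u : nat -> C) (l : C) :
  is_Cseries u l -> exists M, forall n, Cmod (u n) <= M.
Proof.
  intros H. destruct (proj1 (is_Cseries_Cmod u l) H 1 Rlt_0_1) as [N HN].
  destruct (upper_bound_upto (fun n => Cmod (u n)) N) as [M HM].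
  exists (Rmax M 2). intros n.
  destruct (Compare_dec.le_gt_dec n N) as [Hn|Hn].
  - eapply Rle_trans; [apply HM, Hn | apply Rmax_l].
  - destruct n as [|n]; [lia|].
    replace (u (S n)) with ((sum_n u (S n) - l) - (sum_n u n - l))%C
      by (rewrite sum_Sn; change (plus (sum_n u n) (u (S n))) with (sum_n u n + u (S n))%C; ring).
    eapply Rle_trans; [apply Cmod_triangle|]. rewrite Cmod_opp.
    pose proof (HN (S n) ltac:(lia)). pose proof (HN n ltac:(lia)).
    eapply Rle_trans; [|apply Rmax_r]. lra.
Qed.

Lemma is_Cseries_indicator (j : nat) (v : C) :
  is_Cseries (fun n => if Nat.eqb n j then v else 0%C) v.
Proof.
  set (u := fun n => if Nat.eqb n j then v else 0%C).
  assert (Hsum : forall n, sum_n u n = if Nat.ltb n j then (0 : C) else v).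
  { induction n as [|n IH].
    - rewrite sum_O. unfold u. destruct j; reflexivity.
    - rewrite sum_Sn, IH. unfold u.
      destruct (Nat.ltb_spec n j), (Nat.eqb_spec (S n) j), (Nat.ltb_spec (S n) j);
        try lia; apply injective_projections; simpl; ring. }
  apply is_Cseries_Cmod. intros eps Heps. exists j. intros n Hn.
  rewrite Hsum. destruct (Nat.ltb_spec n j); [lia|].
  unfold Cminus. rewrite Cplus_opp_r, Cmod_0. exact Heps.
Qed.

Lemma is_Cseries_geom (z : C) : Cmod z < 1 -> is_Cseries (fun n => z ^ n)%C (/ (1 - z)).
Proof.
  intros Hz.
  destruct (ex_Cseries_le (fun n => z ^ n)%C (fun n => Cmod z ^ n)) as [G HG].
  { intros n. rewrite Cmod_pow. lra. }
  { apply ex_series_geom. rewrite Rabs_pos_eq; auto. apply Cmod_ge_0. }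
  assert (Hshift : (G - 1 = z * G)%C).
  { apply (is_Cseries_unique (fun n => z ^ S n)%C).
    - exact (is_Cseries_incr_1 _ _ HG).
    - exact (is_Cseries_scal z _ _ HG). }
  assert (Hz1 : (1 - z)%C <> 0%C).
  { intros E. assert (z = 1%C) by (replace z with (1 - (1 - z))%C by ring; rewrite E; ring).
    subst. rewrite Cmod_1 in Hz. lra. }
  replace (/ (1 - z))%C with G; [exact HG|].
  replace G with (/ (1 - z) * (G - z * G))%C at 1 by (field; exact Hz1).
  rewrite <- Hshift. ring.
Qed.

Definition is_Cpseries (a : nat -> C) (z l : C) : Prop := is_Cseries (fun n => a n * z ^ n)%C l.

Lemma is_pseries_Cpseries (a : nat -> C) (z l : C) :
  is_pseries (K := C_AbsRing) (V := C_NormedModule) a z l <-> is_Cpseries a z l.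
Proof.
  assert (Hterm : forall n, scal (pow_n z n) (a n) = (a n * z ^ n)%C).
  { intros n. change (pow_n z n * a n = a n * z ^ n)%C. rewrite Cmult_comm. f_equal. }
  split; apply is_series_ext; intros n; rewrite Hterm; reflexivity.
Qed.

Lemma is_Cpseries_0 (a : nat -> C) : is_Cpseries a 0 (a O).
Proof.
  apply (is_Cseries_ext (fun n => if Nat.eqb n 0 then a O else 0%C)).
  - intros [|n]; simpl; ring.
  - apply is_Cseries_indicator.
Qed.

Lemma Cpseries_coef_bound (a : nat -> C) (rho : R) (l : C) (r : R) :
  0 < rho -> 0 <= r -> is_Cpseries a rho l ->
  exists M, 0 <= M /\ forall n, Cmod (a n) * r ^ n <= M * (r / rho) ^ n.
Proof.
  intros Hrho Hr H. destruct (is_Cseries_bounded _ _ H) as [M HM].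
  exists M. split; [eapply Rle_trans; [apply Cmod_ge_0 | apply (HM O)]|].
  intros n. specialize (HM n). rewrite Cmod_mult, Cmod_pow, Cmod_R, Rabs_pos_eq in HM by lra.
  replace (Cmod (a n) * r ^ n) with (Cmod (a n) * rho ^ n * (r / rho) ^ n)
    by (unfold Rdiv; rewrite Rpow_mult_distr, pow_inv; field; apply pow_nonzero; lra).
  apply Rmult_le_compat_r; [apply pow_le, Rdiv_le_0_compat; lra | exact HM].
Qed.

Definition Cpseries_sum (a : nat -> C) (z : C) : C :=
  @epsilon C (inhabits (RtoC 0)) (is_Cpseries a z).

Lemma Cpseries_sum_unique (a : nat -> C) (z l : C) : is_Cpseries a z l -> Cpseries_sum a z = l.
Proof.
  intros H. apply (is_Cseries_unique (fun n => a n * z ^ n)%C); [|exact H].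
  exact (epsilon_spec (inhabits (RtoC 0)) (is_Cpseries a z) (ex_intro _ l H)).
Qed.

(** * Differentiation of complex power series *)

Lemma ex_series_sqr_geom (q : R) : 0 < q < 1 -> ex_series (fun n => (INR n + 1) ^ 2 * q ^ n).
Proof.
  intros Hq.
  assert (Hpos : forall n, 0 < (INR n + 1) ^ 2 * q ^ n).
  { intros n. pose proof (pos_INR n). apply Rmult_lt_0_compat; apply pow_lt; lra. }
  apply (ex_series_ext (fun n => Rabs ((INR n + 1) ^ 2 * q ^ n))).
  { intros n. apply Rabs_pos_eq, Rlt_le, Hpos. }
  apply (ex_series_DAlembert _ q); [lra | intros n; apply Rgt_not_eq, Hpos |].
  apply is_lim_seq_ext with (fun n => q * (1 + / (INR n + 1)) ^ 2).
  { intros n. rewrite S_INR. pose proof (pos_INR n).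
    rewrite Rabs_pos_eq.
    - simpl. field. split; [apply pow_nonzero; lra | lra].
    - apply Rlt_le, Rdiv_lt_0_compat; apply Rmult_lt_0_compat; apply pow_lt; lra. }
  assert (Hinv : is_lim_seq (fun n => 1 + / (INR n + 1)) 1).
  { replace (Finite 1) with (Rbar_plus 1 (Rbar_inv p_infty)) by (simpl; f_equal; ring).
    apply is_lim_seq_plus'; [apply is_lim_seq_const|].
    apply (is_lim_seq_inv (fun n => INR n + 1) p_infty); [|discriminate].
    apply is_lim_seq_plus with (l1 := p_infty) (l2 := 1);
      [apply is_lim_seq_INR | apply is_lim_seq_const | reflexivity]. }
  replace (Finite q) with (Rbar_mult q (1 * 1)) by (simpl; f_equal; ring).
  apply is_lim_seq_scal_l.
  apply is_lim_seq_ext with (fun n => (1 + / (INR n + 1)) * (1 + / (INR n + 1))).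
  { intros n. simpl. ring. }
  apply is_lim_seq_mult'; exact Hinv.
Qed.

Definition pow_remainder (y z : C) (n : nat) : C :=
  (y ^ S n - z ^ S n - INR (S n) * z ^ n * (y - z))%C.

Lemma pow_remainder_S (y z : C) (n : nat) : pow_remainder y z (S n) =
  (y * pow_remainder y z n + INR (S n) * z ^ n * ((y - z) * (y - z)))%C.
Proof.
  unfold pow_remainder. rewrite (S_INR (S n)), !Cpow_S, RtoC_plus. ring.
Qed.

(* The factor [s] on the left avoids the exponent [n - 1] of the natural bound. *)
Lemma Cmod_pow_remainder_le (y z : C) (s : R) (n : nat) : Cmod y <= s -> Cmod z <= s ->
  Cmod (pow_remainder y z n) * s <= (INR n + 1) ^ 2 * s ^ n * Cmod (y - z) ^ 2.
Proof.
  intros Hy Hz. assert (Hs : 0 <= s) by (pose proof (Cmod_ge_0 y); lra).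
  set (d := Cmod (y - z)). assert (Hd : 0 <= d) by apply Cmod_ge_0.
  induction n as [|n IH].
  - assert (H0 : pow_remainder y z 0 = 0%C) by (unfold pow_remainder; simpl; ring).
    rewrite H0, Cmod_0. simpl. nra.
  - rewrite pow_remainder_S.
    pose proof (Cmod_ge_0 (pow_remainder y z n)) as HR. pose proof (pos_INR n).
    assert (Hzn : Cmod z ^ n <= s ^ n) by (apply pow_incr; split; [apply Cmod_ge_0 | auto]).
    assert (0 <= Cmod z ^ n) by (apply pow_le, Cmod_ge_0).
    assert (0 <= s ^ n) by (apply pow_le; auto).
    assert (Hstep : Cmod (y * pow_remainder y z n + INR (S n) * z ^ n * ((y - z) * (y - z)))
                    <= s * Cmod (pow_remainder y z n) + (INR n + 1) * s ^ n * d ^ 2).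
    { eapply Rle_trans; [apply Cmod_triangle|].
      rewrite !Cmod_mult, Cmod_pow, Cmod_R, Rabs_pos_eq, S_INR by apply pos_INR.
      fold d. apply Rplus_le_compat; [apply Rmult_le_compat_r; auto|].
      replace (d * d) with (d ^ 2) by ring.
      apply Rmult_le_compat_r; [nra|]. apply Rmult_le_compat_l; lra. }
    apply (Rmult_le_compat_r s) in Hstep; [|exact Hs].
    eapply Rle_trans; [exact Hstep|].
    assert (HP : 0 <= s * s ^ n * d ^ 2) by (apply Rmult_le_pos; [apply Rmult_le_pos|]; nra).
    apply (Rmult_le_compat_l s) in IH; [|exact Hs].
    rewrite S_INR. simpl pow in *. nra.
Qed.

Lemma is_derive_of_quadratic_remainder (g : C -> C) (z D : C) (K delta : R) : 0 < delta ->
  (forall y, Cmod (y - z) < delta -> Cmod (g y - g z - (y - z) * D) <= K * Cmod (y - z) ^ 2) ->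
  is_derive (K := C_AbsRing) (V := C_NormedModule) g z D.
Proof.
  intros Hdelta Hrem. split; [apply is_linear_scal_l|].
  intros x Hx eps.
  assert (Hzx : z = x) by exact (is_filter_lim_locally_unique _ _ Hx). subst x.
  set (K' := Rabs K + 1).
  assert (HK' : 0 < K') by (pose proof (Rabs_pos K); unfold K'; lra).
  set (h := Rmin delta (eps / K')).
  assert (Hh : 0 < h) by exact (Rmin_pos _ _ Hdelta (Rdiv_lt_0_compat _ _ (cond_pos eps) HK')).
  exists (mkposreal h Hh). intros y Hy.
  change (Cmod (y - z) < h) in Hy.
  change (Cmod (g y - g z - (y - z) * D) <= eps * Cmod (y - z)).
  pose proof (Rmin_l delta (eps / K')). pose proof (Rmin_r delta (eps / K')). unfold h in Hy.
  pose proof (Cmod_ge_0 (y - z)) as Hd.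
  eapply Rle_trans; [apply Hrem; lra|].
  assert (HKd : K' * Cmod (y - z) <= eps).
  { apply Rmult_le_reg_r with (/ K'); [apply Rinv_0_lt_compat; lra|].
    rewrite Rmult_comm, <- Rmult_assoc, Rinv_l by lra. unfold Rdiv in *. lra. }
  pose proof (Rle_abs K). unfold K' in HKd. simpl. nra.
Qed.

Definition Cpseries_diff (a : nat -> C) (n : nat) : C := (INR (S n) * a (S n))%C.

Section PowerSeriesDerivative.

Variables (a : nat -> C) (g : C -> C).
Hypothesis g_pseries : forall w, Cmod w < 1 -> is_Cpseries a w (g w).

Lemma Cpseries_coef_decay (s : R) : 0 < s < 1 ->
  exists M q, 0 <= M /\ 0 < q < 1 /\ forall n, Cmod (a (S n)) * s ^ n <= M * q ^ n.
Proof.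
  intros Hs. set (rho := (s + 1) / 2).
  assert (Hrho : s < rho < 1) by (unfold rho; lra).
  assert (Hg : is_Cpseries a rho (g rho)) by (apply g_pseries; rewrite Cmod_R, Rabs_pos_eq; lra).
  destruct (Cpseries_coef_bound a rho (g rho) s ltac:(lra) ltac:(lra) Hg) as [M [HM Hb]].
  exists (M / rho), (s / rho). split; [|split; [split|]].
  - apply Rdiv_le_0_compat; lra.
  - apply Rdiv_lt_0_compat; lra.
  - apply Rmult_lt_reg_r with rho; [lra|]. unfold Rdiv. rewrite Rmult_assoc, Rinv_l; lra.
  - intros n. specialize (Hb (S n)). simpl pow in Hb.
    apply Rmult_le_reg_r with s; [lra|].
    replace (M / rho * (s / rho) ^ n * s) with (M * (s / rho * (s / rho) ^ n)) by (field; lra).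
    lra.
Qed.

Lemma ex_Cpseries_diff (z : C) : Cmod z < 1 -> exists D, is_Cpseries (Cpseries_diff a) z D.
Proof.
  intros Hz. pose proof (Cmod_ge_0 z).
  destruct (Cpseries_coef_decay ((Cmod z + 1) / 2)) as (M & q & HM & Hq & Hdec); [lra|].
  apply ex_Cseries_le with (fun n => M * ((INR n + 1) ^ 2 * q ^ n)).
  - intros n. unfold Cpseries_diff.
    rewrite !Cmod_mult, Cmod_pow, Cmod_R, Rabs_pos_eq, S_INR by apply pos_INR.
    pose proof (pos_INR n). pose proof (Cmod_ge_0 (a (S n))).
    assert (Hzn : Cmod z ^ n <= ((Cmod z + 1) / 2) ^ n) by (apply pow_incr; lra).
    assert (0 <= Cmod z ^ n) by (apply pow_le; lra).
    assert (Hterm : Cmod (a (S n)) * Cmod z ^ n <= M * q ^ n).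
    { eapply Rle_trans; [|apply Hdec]. apply Rmult_le_compat_l; lra. }
    assert (0 <= Cmod (a (S n)) * Cmod z ^ n) by (apply Rmult_le_pos; lra).
    simpl pow. nra.
  - exact (ex_series_scal_l M _ (ex_series_sqr_geom q Hq)).
Qed.

Lemma Cpseries_taylor_remainder_le (s : R) : 0 < s < 1 -> exists K, forall y z D,
  Cmod y <= s -> Cmod z <= s -> is_Cpseries (Cpseries_diff a) z D ->
  Cmod (g y - g z - (y - z) * D) <= K * Cmod (y - z) ^ 2.
Proof.
  intros Hs. destruct (Cpseries_coef_decay s Hs) as (M & q & HM & Hq & Hdec).
  set (S2 := Series (fun n => (INR n + 1) ^ 2 * q ^ n)).
  exists (M / s * S2). intros y z D Hy Hz HD.
  assert (Hrem : is_Cseries (fun n => a (S n) * pow_remainder y z n)%C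
                            (g y - g z - (y - z) * D)).
  { assert (Hgy : Cmod y < 1) by lra. assert (Hgz : Cmod z < 1) by lra.
    pose proof (is_Cseries_minus _ _ _ _ (is_Cseries_incr_1 _ _ (g_pseries y Hgy))
                                 (is_Cseries_incr_1 _ _ (g_pseries z Hgz))) as Hdiff.
    pose proof (is_Cseries_minus _ _ _ _ Hdiff (is_Cseries_scal (y - z) _ _ HD)) as H.
    replace (g y - g z - (y - z) * D)%C
      with (g y - a O * y ^ O - (g z - a O * z ^ O) - (y - z) * D)%C by (simpl; ring).
    revert H. apply is_Cseries_ext. intros n. unfold pow_remainder, Cpseries_diff. simpl. ring. }
  set (d := Cmod (y - z)).
  apply (is_Cseries_Cmod_le _ _ (fun n => M / s * d ^ 2 * ((INR n + 1) ^ 2 * q ^ n)) _ Hrem).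
  - intros n. rewrite Cmod_mult. apply Rmult_le_reg_r with s; [lra|].
    replace (M / s * d ^ 2 * ((INR n + 1) ^ 2 * q ^ n) * s)
      with (M * q ^ n * ((INR n + 1) ^ 2 * d ^ 2)) by (field; lra).
    rewrite Rmult_assoc.
    eapply Rle_trans.
    { apply Rmult_le_compat_l; [apply Cmod_ge_0 | apply Cmod_pow_remainder_le; eauto]. }
    replace (Cmod (a (S n)) * ((INR n + 1) ^ 2 * s ^ n * Cmod (y - z) ^ 2))
      with (Cmod (a (S n)) * s ^ n * ((INR n + 1) ^ 2 * d ^ 2)) by (unfold d; ring).
    apply Rmult_le_compat_r; [|apply Hdec].
    apply Rmult_le_pos; apply pow2_ge_0.
  - replace (M / s * S2 * d ^ 2) with (M / s * d ^ 2 * S2) by ring.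
    exact (is_series_scal_l (M / s * d ^ 2) _ _ (Series_correct _ (ex_series_sqr_geom q Hq))).
Qed.

Theorem is_derive_Cpseries (z : C) : Cmod z < 1 -> exists D,
  is_Cpseries (Cpseries_diff a) z D /\ is_derive (K := C_AbsRing) (V := C_NormedModule) g z D.
Proof.
  intros Hz. destruct (ex_Cpseries_diff z Hz) as [D HD]. exists D. split; [exact HD|].
  pose proof (Cmod_ge_0 z). set (s := (Cmod z + 1) / 2).
  destruct (Cpseries_taylor_remainder_le s) as [K HK]; [unfold s; lra|].
  apply (is_derive_of_quadratic_remainder g z D K (s - Cmod z)); [unfold s; lra|].
  intros y Hy. apply HK; [| unfold s; lra | exact HD].
  replace y with (y - z + z)%C by ring.
  eapply Rle_trans; [apply Cmod_triangle|]. lra.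
Qed.

End PowerSeriesDerivative.

(** * Finite sums and roots of unity *)

Fixpoint Csum (f : nat -> C) (N : nat) : C :=
  match N with O => 0%C | S n => (Csum f n + f n)%C end.

Lemma Csum_ext (f g : nat -> C) (N : nat) : (forall k, f k = g k) -> Csum f N = Csum g N.
Proof. intros H. induction N as [|N IH]; simpl; [|rewrite IH, H]; reflexivity. Qed.

Lemma Csum_const (c : C) (N : nat) : Csum (fun _ => c) N = (INR N * c)%C.
Proof.
  induction N as [|N IH]; simpl Csum; [simpl; ring|].
  rewrite IH, S_INR, RtoC_plus. ring.
Qed.

Lemma Csum_lincomb (x y : C) (f g : nat -> C) (N : nat) :
  Csum (fun k => x * f k + y * g k)%C N = (x * Csum f N + y * Csum g N)%C.
Proof. induction N as [|N IH]; simpl Csum; [|rewrite IH]; ring. Qed.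

Lemma Csum_conj (f : nat -> C) (N : nat) : Csum (fun k => Cconj (f k)) N = Cconj (Csum f N).
Proof.
  induction N as [|N IH]; simpl Csum.
  - now rewrite Cconj_RtoC.
  - rewrite IH. apply eq_sym, Cplus_conj.
Qed.

Lemma Cmod_Csum_le (f : nat -> C) (b : R) (N : nat) :
  (forall k, Cmod (f k) <= b) -> Cmod (Csum f N) <= INR N * b.
Proof.
  intros H. induction N as [|N IH]; simpl Csum.
  - rewrite Cmod_0. simpl. lra.
  - rewrite S_INR. eapply Rle_trans; [apply Cmod_triangle|]. specialize (H N). lra.
Qed.

Lemma is_Cseries_Csum (u : nat -> nat -> C) (U : nat -> C) (N : nat) :
  (forall k, is_Cseries (u k) (U k)) ->
  is_Cseries (fun n => Csum (fun k => u k n) N) (Csum U N).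
Proof.
  intros H. induction N as [|N IH]; simpl Csum.
  - apply (is_Cseries_ext (fun n => if Nat.eqb n 0 then 0%C else 0%C)).
    + intros n. now destruct (Nat.eqb n 0).
    + apply is_Cseries_indicator.
  - apply is_Cseries_plus; auto.
Qed.

Lemma Csum_geom (z : C) (N : nat) : ((z - 1) * Csum (fun k => z ^ k) N = z ^ N - 1)%C.
Proof.
  induction N as [|N IH]; simpl Csum; [simpl; ring|].
  rewrite Cmult_plus_distr_l, IH, Cpow_S. ring.
Qed.

Lemma Csum_geom_root (z : C) (N : nat) :
  (z ^ N = 1)%C -> z <> 1%C -> Csum (fun k => z ^ k)%C N = 0%C.
Proof.
  intros HN Hz. pose proof (Csum_geom z N) as H. rewrite HN in H.
  assert (Hz1 : (z - 1)%C <> 0%C).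
  { intros E. apply Hz. replace z with (z - 1 + 1)%C by ring. rewrite E. ring. }
  replace (Csum (fun k => z ^ k)%C N) with (/ (z - 1) * ((z - 1) * Csum (fun k => z ^ k)%C N))%C
    by (field; exact Hz1).
  rewrite H. ring.
Qed.

Definition root_of_unity (N : nat) : C := (cos (2 * PI / INR N), sin (2 * PI / INR N)).

Lemma root_of_unity_pow (N n : nat) :
  (root_of_unity N ^ n)%C = (cos (INR n * (2 * PI / INR N)), sin (INR n * (2 * PI / INR N))).
Proof.
  induction n as [|n IH].
  - simpl. rewrite Rmult_0_l, cos_0, sin_0. reflexivity.
  - rewrite Cpow_S, IH, S_INR. unfold root_of_unity.
    apply injective_projections; simpl;
      rewrite Rmult_plus_distr_r, Rmult_1_l; [rewrite cos_plus | rewrite sin_plus]; ring.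
Qed.

Lemma Cmod_root_of_unity (N : nat) : Cmod (root_of_unity N) = 1.
Proof.
  unfold Cmod, root_of_unity. simpl. rewrite Rplus_comm, !Rmult_1_r.
  pose proof (sin2_cos2 (2 * PI / INR N)) as H. unfold Rsqr in H. rewrite H. apply sqrt_1.
Qed.

Lemma root_of_unity_mul_conj (N : nat) : (root_of_unity N * Cconj (root_of_unity N))%C = 1%C.
Proof.
  unfold root_of_unity. apply injective_projections; simpl.
  - pose proof (sin2_cos2 (2 * PI / INR N)) as H. unfold Rsqr in H. lra.
  - ring.
Qed.

Lemma root_of_unity_pow_N (N : nat) : (0 < N)%nat -> (root_of_unity N ^ N)%C = 1%C.
Proof.
  intros H. rewrite root_of_unity_pow.
  replace (INR N * (2 * PI / INR N)) with (2 * PI) by (field; apply not_0_INR; lia).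
  rewrite cos_2PI, sin_2PI. reflexivity.
Qed.

Lemma root_of_unity_pow_neq_1 (N m : nat) : (0 < m < N)%nat -> (root_of_unity N ^ m)%C <> 1%C.
Proof.
  intros H E. rewrite root_of_unity_pow in E. injection E as E1 _.
  set (x := INR m * (2 * PI / INR N)) in E1.
  assert (Hx : 0 < x / 2 < PI).
  { assert (0 < INR m) by (apply lt_0_INR; lia).
    assert (INR m < INR N) by (apply lt_INR; lia).
    pose proof PI_RGT_0.
    replace (x / 2) with (PI * (INR m / INR N)) by (unfold x; field; lra).
    split; [apply Rmult_lt_0_compat; [lra | apply Rdiv_lt_0_compat; lra]|].
    rewrite <- (Rmult_1_r PI) at 2. apply Rmult_lt_compat_l; [lra|].
    apply (Rmult_lt_reg_r (INR N)); [lra|]. unfold Rdiv. rewrite Rmult_assoc, Rinv_l; lra. }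
  pose proof (sin_gt_0 (x / 2) (proj1 Hx) (proj2 Hx)).
  replace x with (2 * (x / 2)) in E1 by field. rewrite cos_2a_sin in E1. nra.
Qed.

Lemma Csum_root_of_unity_pow (N m : nat) : (0 < m < N)%nat ->
  Csum (fun k => (root_of_unity N ^ m) ^ k)%C N = 0%C.
Proof.
  intros H. apply Csum_geom_root; [|apply root_of_unity_pow_neq_1, H].
  rewrite <- Cpow_mult_r, Nat.mul_comm, Cpow_mult_r, root_of_unity_pow_N by lia.
  apply Cpow_1_l.
Qed.

Lemma Csum_root_of_unity_conj_pow (N m : nat) : (0 < m < N)%nat ->
  Csum (fun k => (Cconj (root_of_unity N) ^ m) ^ k)%C N = 0%C.
Proof.
  intros H. rewrite (Csum_ext _ (fun k => Cconj ((root_of_unity N ^ m) ^ k)))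
    by (intros k; now rewrite !Cpow_conj).
  rewrite Csum_conj, Csum_root_of_unity_pow by exact H.
  apply injective_projections; simpl; ring.
Qed.

Lemma Cpow_cancel (z x : C) (m n : nat) : (z * x = 1)%C -> (n <= m)%nat ->
  (z ^ m * x ^ n = z ^ (m - n))%C.
Proof.
  intros H Hnm. replace m with ((m - n) + n)%nat at 1 by lia.
  rewrite Cpow_add_r, <- Cmult_assoc, <- Cpow_mult_l, H, Cpow_1_l. ring.
Qed.

Lemma Csum_root_of_unity_orth (N n j : nat) : (n < N)%nat -> (j < N)%nat ->
  Csum (fun k => (root_of_unity N ^ n * Cconj (root_of_unity N) ^ j) ^ k)%C N
  = if Nat.eqb n j then RtoC (INR N) else 0%C.
Proof.
  intros Hn Hj. pose proof (root_of_unity_mul_conj N) as Hw.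
  destruct (Nat.eqb_spec n j) as [<-|Hne].
  - rewrite Cpow_cancel, Nat.sub_diag by (exact Hw || lia).
    rewrite (Csum_ext _ (fun _ => 1%C)) by (intros k; apply Cpow_1_l).
    rewrite Csum_const. ring.
  - destruct (Compare_dec.le_lt_dec j n).
    + rewrite Cpow_cancel by (exact Hw || lia). apply Csum_root_of_unity_pow. lia.
    + rewrite (Cmult_comm (root_of_unity N ^ n)), Cpow_cancel
        by (lia || (rewrite Cmult_comm; exact Hw)).
      apply Csum_root_of_unity_conj_pow. lia.
Qed.

Lemma Csum_root_of_unity_conj_orth (N n j : nat) : (n + j < N)%nat ->
  Csum (fun k => (Cconj (root_of_unity N) ^ n * Cconj (root_of_unity N) ^ j) ^ k)%C N
  = if Nat.eqb (n + j) 0 then RtoC (INR N) else 0%C.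
Proof.
  intros H. rewrite <- Cpow_add_r. destruct (Nat.eqb_spec (n + j) 0) as [E|E].
  - rewrite E. rewrite (Csum_ext _ (fun _ => 1%C)) by (intros k; apply Cpow_1_l).
    rewrite Csum_const. ring.
  - apply Csum_root_of_unity_conj_pow. lia.
Qed.

(** * The Caratheodory inequality *)

Definition moment (w : nat -> R) (X : nat -> C) (N j : nat) : C :=
  Csum (fun k => w k * X k ^ j)%C N.

Lemma Cmod_Csum_le_Re (f g : nat -> C) (N : nat) : (forall k, Cmod (f k) <= Re (g k)) ->
  Cmod (Csum f N) <= Re (Csum g N).
Proof.
  intros H. induction N as [|N IH]; simpl Csum.
  - rewrite Cmod_0. simpl. lra.
  - rewrite re_plus. eapply Rle_trans; [apply Cmod_triangle|]. specialize (H N). lra.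
Qed.

(* The two sides are |sum_k w_k (X_k - m)^2| and sum_k w_k |X_k - m|^2. *)
Lemma moment_square_ineq (w : nat -> R) (X : nat -> C) (m : C) (N : nat) :
  (forall k, 0 <= w k) -> (forall k, (X k * Cconj (X k))%C = 1%C) ->
  Cmod (moment w X N 2 - 2 * m * moment w X N 1 + m * m * moment w X N 0)
  <= Re ((1 + m * Cconj m) * moment w X N 0 - m * Cconj (moment w X N 1)
         - Cconj m * moment w X N 1).
Proof.
  intros Hw HX. unfold moment.
  rewrite <- Csum_conj.
  rewrite (Csum_ext (fun k => Cconj (w k * X k ^ 1))%C (fun k => w k * Cconj (X k))%C)
    by (intros k; rewrite Cmult_conj, Cpow_1_r; f_equal;
        apply injective_projections; simpl; ring).
  assert (Hlhs : forall n, (Csum (fun k => w k * X k ^ 2) n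
                    - 2 * m * Csum (fun k => w k * X k ^ 1) n
                    + m * m * Csum (fun k => w k * X k ^ 0) n
                  = Csum (fun k => w k * ((X k - m) * (X k - m))) n)%C).
  { induction n as [|n IH]; cbn [Csum]; [ring|]. rewrite <- IH. ring. }
  assert (Hrhs : forall n, ((1 + m * Cconj m) * Csum (fun k => w k * X k ^ 0) n
                    - m * Csum (fun k => w k * Cconj (X k)) n
                    - Cconj m * Csum (fun k => w k * X k ^ 1) n
                  = Csum (fun k => w k * ((X k - m) * Cconj (X k - m))) n)%C).
  { induction n as [|n IH]; cbn [Csum]; [ring|]. rewrite <- IH.
    rewrite Cminus_conj. specialize (HX n).
    replace (w n * ((X n - m) * (Cconj (X n) - Cconj m)))%C
      with (w n * (X n * Cconj (X n) + m * Cconj m - m * Cconj (X n) - Cconj m * X n))%C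
      by ring.
    rewrite HX. ring. }
  rewrite Hlhs, Hrhs. apply Cmod_Csum_le_Re. intros k.
  rewrite <- Cmod2_conj, <- RtoC_mult, re_RtoC, !Cmod_mult, Cmod_R,
    Rabs_pos_eq by apply Hw.
  right. ring.
Qed.

Lemma moment_perturbation (N eps : R) (m e2 S0 S1 S2 : C) : 0 < N ->
  Cmod (S0 - N) <= N * eps -> Cmod (S1 - N * m) <= N * eps -> Cmod (S2 - N * e2) <= N * eps ->
  Cmod (S2 - 2 * m * S1 + m * m * S0)
    <= Re ((1 + m * Cconj m) * S0 - m * Cconj S1 - Cconj m * S1) ->
  Cmod (e2 - m * m) <= 1 - Cmod m ^ 2 + 2 * eps * (1 + Cmod m) ^ 2.
Proof.
  intros HN H0 H1 H2 HF.
  set (E0 := (S0 - N)%C) in *. set (E1 := (S1 - N * m)%C) in *. set (E2 := (S2 - N * e2)%C) in *.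
  set (Q := (E2 - 2 * m * E1 + m * m * E0)%C).
  set (P := ((1 + m * Cconj m) * E0 - m * Cconj E1 - Cconj m * E1)%C).
  assert (HQ : (S2 - 2 * m * S1 + m * m * S0 = N * (e2 - m * m) + Q)%C)
    by (unfold Q, E0, E1, E2; ring).
  assert (HP : ((1 + m * Cconj m) * S0 - m * Cconj S1 - Cconj m * S1
                = RtoC (N * (1 - Cmod m ^ 2)) + P)%C).
  { unfold P, E0, E1. rewrite !Cminus_conj, Cmult_conj.
    rewrite RtoC_mult, RtoC_minus, Cmod2_conj.
    rewrite Cconj_RtoC. ring. }
  rewrite HQ, HP, re_plus, re_RtoC in HF.
  pose proof (Cmod_ge_0 m). pose proof (Cmod_ge_0 E0).
  pose proof (Cmod_ge_0 E1). pose proof (Cmod_ge_0 E2).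
  assert (Hm2 : Cmod (m * Cconj m) = Cmod m ^ 2) by (rewrite Cmod_mult, Cmod_conj; ring).
  assert (BQ : Cmod Q <= Cmod E2 + 2 * Cmod m * Cmod E1 + Cmod m ^ 2 * Cmod E0).
  { unfold Q, Cminus. eapply Rle_trans; [apply Cmod_triangle|].
    eapply Rle_trans; [apply Rplus_le_compat_r, Cmod_triangle|].
    rewrite Cmod_opp, !Cmod_mult, Cmod_R, Rabs_pos_eq by lra. right. ring. }
  assert (BP : Cmod P <= (1 + Cmod m ^ 2) * Cmod E0 + 2 * Cmod m * Cmod E1).
  { unfold P, Cminus. eapply Rle_trans; [apply Cmod_triangle|].
    eapply Rle_trans; [apply Rplus_le_compat_r, Cmod_triangle|].
    rewrite !Cmod_opp, !Cmod_mult, !Cmod_conj.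
    assert (Cmod (1 + m * Cconj m) <= 1 + Cmod m ^ 2)
      by (eapply Rle_trans; [apply Cmod_triangle|]; rewrite Cmod_1, Hm2; lra).
    nra. }
  pose proof (Cmod_triangle_inv (N * (e2 - m * m))%C (- Q)%C) as T1.
  rewrite Cmod_opp, Cmod_mult, Cmod_R, (Rabs_pos_eq N) in T1 by lra.
  replace (N * (e2 - m * m) - - Q)%C with (N * (e2 - m * m) + Q)%C in T1 by ring.
  apply Rabs_le_between in T1 as [_ T1].
  pose proof (re_le_Cmod P) as T2. apply Rabs_le_between in T2 as [_ T2].
  assert (Q1 : Cmod m * Cmod E1 <= Cmod m * (N * eps)) by (apply Rmult_le_compat_l; auto).
  assert (Q2 : Cmod m ^ 2 * Cmod E0 <= Cmod m ^ 2 * (N * eps))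
    by (apply Rmult_le_compat_l; auto; apply pow2_ge_0).
  apply Rmult_le_reg_l with N; [exact HN|]. lra.
Qed.

Lemma pow_le_pow_of_le_1 (u : R) (m n : nat) : 0 <= u <= 1 -> (m <= n)%nat -> u ^ n <= u ^ m.
Proof.
  intros Hu Hmn. replace n with (m + (n - m))%nat by lia. rewrite pow_add.
  assert (u ^ (n - m) <= 1) by (rewrite <- (pow1 (n - m)); apply pow_incr; lra).
  assert (0 <= u ^ m) by (apply pow_le; lra).
  rewrite <- (Rmult_1_r (u ^ m)) at 2. apply Rmult_le_compat_l; assumption.
Qed.

Lemma le_of_le_add_geom (x y K u : R) (n0 : nat) : 0 <= u < 1 ->
  (forall n, (n0 <= n)%nat -> x <= y + K * u ^ n) -> x <= y.
Proof.
  intros Hu H. destruct (Rle_lt_dec x y) as [Hle|Hlt]; [exact Hle|exfalso].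
  assert (HK : 0 < Rabs K + 1) by (pose proof (Rabs_pos K); lra).
  destruct (pow_lt_1_zero u ltac:(rewrite Rabs_pos_eq; lra) ((x - y) / (Rabs K + 1))
              ltac:(apply Rdiv_lt_0_compat; lra)) as [n1 Hn1].
  specialize (H (n0 + n1)%nat ltac:(lia)). specialize (Hn1 (n0 + n1)%nat ltac:(lia)).
  rewrite Rabs_pos_eq in Hn1 by (apply pow_le; lra).
  assert (Hp : 0 <= u ^ (n0 + n1)) by (apply pow_le; lra).
  apply (Rmult_lt_compat_l (Rabs K + 1)) in Hn1; [|exact HK].
  replace ((Rabs K + 1) * ((x - y) / (Rabs K + 1))) with (x - y) in Hn1 by (field; lra).
  assert (K * u ^ (n0 + n1) <= Rabs K * u ^ (n0 + n1))
    by (apply Rmult_le_compat_r, Rle_abs; exact Hp).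
  rewrite Rmult_plus_distr_r, Rmult_1_l in Hn1. lra.
Qed.

Lemma le_1_of_forall_lt_1 (A : R) : (forall r, 0 < r < 1 -> r ^ 2 * A <= 1) -> A <= 1.
Proof.
  intros H. destruct (Rle_lt_dec A 1) as [Hle|Hlt]; [exact Hle|exfalso].
  assert (HA : 0 < / A < 1)
    by (split; [apply Rinv_0_lt_compat; lra | rewrite <- Rinv_1; apply Rinv_lt_contravar; lra]).
  set (r := sqrt ((1 + / A) / 2)).
  assert (Hr2 : r ^ 2 = (1 + / A) / 2)
    by (unfold r; simpl; rewrite Rmult_1_r; apply sqrt_sqrt; lra).
  assert (Hr : 0 < r < 1).
  { split; [apply sqrt_lt_R0; lra|].
    apply Rlt_le_trans with (sqrt 1); [apply sqrt_lt_1; lra | rewrite sqrt_1; lra]. }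
  specialize (H r Hr). rewrite Hr2 in H.
  replace ((1 + / A) / 2 * A) with ((A + 1) / 2) in H by (field; lra). lra.
Qed.

Definition sample_point (r : R) (N k : nat) : C := (r * root_of_unity N ^ k)%C.

Lemma Cmod_sample_point (r : R) (N k : nat) : 0 <= r -> Cmod (sample_point r N k) = r.
Proof.
  intros Hr. unfold sample_point.
  rewrite Cmod_mult, Cmod_pow, Cmod_root_of_unity, pow1, Cmod_R, Rabs_pos_eq; lra.
Qed.

Lemma half_Re_monomial_rotation (w x : C) (r : R) (k n j : nat) :
  ((Cconj w ^ k) ^ j / 2 * (x * (r * w ^ k) ^ n + Cconj (x * (r * w ^ k) ^ n)))%C
  = (x * r ^ n / 2 * (w ^ n * Cconj w ^ j) ^ k
     + Cconj x * r ^ n / 2 * (Cconj w ^ n * Cconj w ^ j) ^ k)%C.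
Proof.
  rewrite !Cmult_conj, !Cpow_conj, Cmult_conj, Cconj_RtoC, !Cpow_conj.
  rewrite !Cpow_mult_l, <- !Cpow_mult_r.
  replace (n * k)%nat with (k * n)%nat by lia. replace (j * k)%nat with (k * j)%nat by lia.
  field.
Qed.

Section Caratheodory.

Variables (c : nat -> C) (p : C -> C).
Hypothesis c_0 : c O = 1%C.
Hypothesis p_pseries : forall z, Cmod z < 1 -> is_Cpseries c z (p z).
Hypothesis Re_p_nonneg : forall z, Cmod z < 1 -> z <> 0%C -> 0 <= Re (p z).

(* The j-th Fourier coefficient of [fun t => Re (p (r * exp (i t)))]. *)
Definition scaled_coef (r : R) (j : nat) : C :=
  if Nat.eqb j 0 then 1%C else (r ^ j * c j / 2)%C.

Definition sample_moment (r : R) (N j : nat) : C :=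
  moment (fun k => Re (p (sample_point r N k))) (fun k => Cconj (root_of_unity N) ^ k)%C N j.

Definition sample_term (r : R) (N j k n : nat) : C :=
  ((Cconj (root_of_unity N) ^ k) ^ j / 2
   * (c n * sample_point r N k ^ n + Cconj (c n * sample_point r N k ^ n)))%C.

Lemma sample_term_sum (r : R) (N j n : nat) : (j <= 2)%nat -> (n + 2 < N)%nat ->
  Csum (fun k => sample_term r N j k n) N
  = if Nat.eqb n j then (INR N * scaled_coef r j)%C else 0%C.
Proof.
  intros Hj Hn. unfold sample_term, sample_point.
  rewrite (Csum_ext _ _ _ (fun k => half_Re_monomial_rotation _ _ _ k n j)), Csum_lincomb.
  rewrite Csum_root_of_unity_orth, Csum_root_of_unity_conj_orth by lia.
  unfold scaled_coef.
  destruct (Nat.eqb_spec n j) as [<-|Hne].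
  - destruct (Nat.eqb_spec (n + n) 0), (Nat.eqb_spec n 0); try lia.
    + subst. simpl. rewrite c_0, Cconj_RtoC. field.
    + field.
  - destruct (Nat.eqb_spec (n + j) 0); [lia|]. ring.
Qed.

Lemma Cmod_sample_term_le (r : R) (N j k n : nat) : 0 <= r ->
  Cmod (sample_term r N j k n) <= Cmod (c n) * r ^ n.
Proof.
  intros Hr. unfold sample_term.
  rewrite Cmod_mult, Cmod_div by (intros E; injection E; lra).
  rewrite !Cmod_pow, Cmod_conj, Cmod_root_of_unity, !pow1, Cmod_R, Rabs_pos_eq by lra.
  eapply Rle_trans; [apply Rmult_le_compat_l; [lra | apply Cmod_triangle]|].
  rewrite Cmod_conj, Cmod_mult, Cmod_pow, Cmod_sample_point by exact Hr. lra.
Qed.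

Lemma is_Cseries_sample_term (r : R) (N j k : nat) : 0 <= r < 1 ->
  is_Cseries (sample_term r N j k)
    (Re (p (sample_point r N k)) * (Cconj (root_of_unity N) ^ k) ^ j)%C.
Proof.
  intros Hr. set (z := sample_point r N k). set (X := ((Cconj (root_of_unity N) ^ k) ^ j)%C).
  assert (Hz : Cmod z < 1) by (unfold z; rewrite Cmod_sample_point; lra).
  pose proof (p_pseries _ Hz) as Hp.
  rewrite re_alt. replace ((p z + Cconj (p z)) / 2 * X)%C with (X / 2 * (p z + Cconj (p z)))%C
    by field.
  exact (is_Cseries_scal _ _ _ (is_Cseries_plus _ _ _ _ Hp (is_Cseries_conj _ _ Hp))).
Qed.

(* The terms of index n < N - 2 contribute exactly [N * scaled_coef r j] (sample_term_sum);
   the aliased ones are dominated by N M u^(N-2) u^n. *)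
Lemma sample_moment_approx (r : R) (N j : nat) (M u : R) :
  0 < r < 1 -> (5 <= N)%nat -> (j <= 2)%nat ->
  0 <= M -> 0 < u < 1 -> (forall n, Cmod (c n) * r ^ n <= M * (u ^ n * u ^ n)) ->
  Cmod (sample_moment r N j - INR N * scaled_coef r j) <= INR N * M * u ^ (N - 2) / (1 - u).
Proof.
  intros Hr HN Hj HM Hu Hcn.
  pose proof (is_Cseries_minus _ _ _ _
    (is_Cseries_Csum _ _ N (fun k => is_Cseries_sample_term r N j k ltac:(lra)))
    (is_Cseries_indicator j (INR N * scaled_coef r j)%C)) as Hdiff.
  apply (is_Cseries_Cmod_le _ _ (fun n => INR N * M * u ^ (N - 2) * u ^ n) _ Hdiff).
  - intros n. pose proof (pos_INR N). assert (0 <= u ^ n) by (apply pow_le; lra).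
    assert (0 <= u ^ (N - 2)) by (apply pow_le; lra).
    destruct (Compare_dec.lt_dec (n + 2) N) as [Hn|Hn].
    + assert (0 <= INR N * M * u ^ (N - 2) * u ^ n)
        by (repeat apply Rmult_le_pos; assumption).
      rewrite sample_term_sum by assumption.
      destruct (Nat.eqb n j); unfold Cminus; rewrite Cplus_opp_r, Cmod_0; assumption.
    + replace (Nat.eqb n j) with false by (symmetry; apply Nat.eqb_neq; lia).
      unfold Cminus. rewrite Copp_0, Cplus_0_r.
      eapply Rle_trans; [apply Cmod_Csum_le, (fun k => Cmod_sample_term_le r N j k n ltac:(lra))|].
      assert (u ^ n <= u ^ (N - 2)) by (apply pow_le_pow_of_le_1; lra || lia).
      assert (M * (u ^ n * u ^ n) <= M * (u ^ (N - 2) * u ^ n))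
        by (apply Rmult_le_compat_l, Rmult_le_compat_r; assumption).
      rewrite !Rmult_assoc. apply Rmult_le_compat_l; [assumption|].
      specialize (Hcn n). lra.
  - unfold Rdiv. apply (is_series_scal_l (INR N * M * u ^ (N - 2)) (fun n => u ^ n)).
    apply is_series_geom. rewrite Rabs_pos_eq; lra.
Qed.

Lemma sample_weight_nonneg (r : R) (N k : nat) : 0 < r < 1 -> 0 <= Re (p (sample_point r N k)).
Proof.
  intros Hr. apply Re_p_nonneg; [rewrite Cmod_sample_point; lra|].
  intros E. assert (Hc : Cmod (sample_point r N k) = 0) by (rewrite E; apply Cmod_0).
  rewrite Cmod_sample_point in Hc; lra.
Qed.

Lemma coef_sqr_geom_bound (r : R) : 0 < r < 1 -> exists M u,
  0 <= M /\ 0 < u < 1 /\ forall n, Cmod (c n) * r ^ n <= M * (u ^ n * u ^ n).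
Proof.
  intros Hr. set (rho := (r + 1) / 2).
  assert (Hrho : r < rho < 1) by (unfold rho; lra).
  assert (Hp : is_Cpseries c rho (p rho)) by (apply p_pseries; rewrite Cmod_R, Rabs_pos_eq; lra).
  destruct (Cpseries_coef_bound c rho (p rho) r ltac:(lra) ltac:(lra) Hp) as [M [HM Hcn]].
  assert (Ht : 0 < r / rho < 1).
  { split; [apply Rdiv_lt_0_compat; lra|].
    apply Rmult_lt_reg_r with rho; [lra|]. unfold Rdiv. rewrite Rmult_assoc, Rinv_l; lra. }
  exists M, (sqrt (r / rho)). split; [exact HM | split].
  - split; [apply sqrt_lt_R0; lra|].
    apply Rlt_le_trans with (sqrt 1); [apply sqrt_lt_1; lra | rewrite sqrt_1; lra].
  - intros n. rewrite <- Rpow_mult_distr, sqrt_sqrt by lra. apply Hcn.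
Qed.

Lemma caratheodory_scaled (r : R) : 0 < r < 1 ->
  Cmod (scaled_coef r 2 - scaled_coef r 1 * scaled_coef r 1) <= 1 - Cmod (scaled_coef r 1) ^ 2.
Proof.
  intros Hr. destruct (coef_sqr_geom_bound r Hr) as (M & u & HM & Hu & Hcn).
  set (m := scaled_coef r 1). set (e2 := scaled_coef r 2).
  apply (le_of_le_add_geom _ _ (2 * (M / (1 - u)) * (1 + Cmod m) ^ 2) u 3); [lra|].
  intros n Hn. set (N := (n + 2)%nat).
  assert (HN : 0 < INR N) by (apply lt_0_INR; unfold N; lia).
  set (eps := M * u ^ n / (1 - u)).
  assert (Happrox : forall j, (j <= 2)%nat ->
    Cmod (sample_moment r N j - INR N * scaled_coef r j) <= INR N * eps).
  { intros j Hj. eapply Rle_trans; [apply (sample_moment_approx r N j M u); auto; unfold N; lia|].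
    replace (N - 2)%nat with n by (unfold N; lia). right. unfold eps. field. lra. }
  assert (Hunit : forall k,
    (Cconj (root_of_unity N) ^ k * Cconj (Cconj (root_of_unity N) ^ k) = 1)%C).
  { intros k. rewrite Cpow_conj, Cconj_conj, <- Cpow_mult_l, Cmult_comm, root_of_unity_mul_conj.
    apply Cpow_1_l. }
  pose proof (moment_square_ineq _ _ m N (fun k => sample_weight_nonneg r N k Hr) Hunit) as Hsq.
  eapply Rle_trans.
  - apply (moment_perturbation (INR N) eps m e2
             (sample_moment r N 0) (sample_moment r N 1) (sample_moment r N 2) HN);
      [| | |exact Hsq].
    + rewrite <- (Cmult_1_r (RtoC (INR N))). apply (Happrox 0%nat). lia.
    + apply (Happrox 1%nat). lia.
    + apply (Happrox 2%nat). lia.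
  - right. unfold eps. field. lra.
Qed.

Theorem caratheodory_second_coef : Cmod (c 2 - c 1 * c 1 / 2) <= 2 - Cmod (c 1) ^ 2 / 2.
Proof.
  enough (Cmod (c 2 - c 1 * c 1 / 2) / 2 + Cmod (c 1) ^ 2 / 4 <= 1) by lra.
  apply le_1_of_forall_lt_1. intros r Hr.
  pose proof (caratheodory_scaled r Hr) as H. unfold scaled_coef in H. simpl Nat.eqb in H.
  cbv iota in H.
  replace (r ^ 2 * c 2 / 2 - r ^ 1 * c 1 / 2 * (r ^ 1 * c 1 / 2))%C
    with (r ^ 2 * ((c 2 - c 1 * c 1 / 2) / 2))%C in H by field.
  assert (H2 : (2 : C) <> 0%C) by (intros E; injection E; lra).
  rewrite Cmod_mult, Cmod_div, Cmod_div, Cmod_mult, !Cmod_pow, Cmod_R, Cmod_R, Rabs_pos_eq,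
    (Rabs_pos_eq 2) in H by (exact H2 || lra).
  simpl pow in *. nra.
Qed.

End Caratheodory.

(** * The class A_beta *)

Lemma cderiv_Cpseries (f : C -> C) (a : nat -> C) (z d : C) :
  (forall w, Cmod w < 1 -> is_Cpseries a w (f w)) ->
  Cmod z < 1 -> cderiv f z d -> is_Cpseries (Cpseries_diff a) z d.
Proof.
  intros Hf Hz Hd. destruct (is_derive_Cpseries a f Hf z Hz) as [D [HD HdD]].
  replace d with D; [exact HD|].
  apply is_C_derive_unique in Hd. apply is_C_derive_unique in HdD. congruence.
Qed.

Lemma classA_coef_0_1 (f : C -> C) (a : nat -> C) :
  classA f -> (forall w, Cmod w < 1 -> is_Cpseries a w (f w)) ->
  a O = 0%C /\ a 1%nat = 1%C.
Proof.
  intros [_ [Hf0 Hf'0]] Hf. assert (H0 : Cmod 0 < 1) by (rewrite Cmod_0; lra).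
  split.
  - rewrite <- Hf0. exact (is_Cseries_unique _ _ _ (is_Cpseries_0 a) (Hf _ H0)).
  - pose proof (is_Cseries_unique _ _ _ (is_Cpseries_0 _)
                  (cderiv_Cpseries f a 0 1 Hf H0 Hf'0)) as E.
    unfold Cpseries_diff in E. simpl INR in E. rewrite <- E. ring.
Qed.

Definition Abeta_coef (beta : R) (a : nat -> C) (n : nat) : C :=
  ((INR (S n) - INR n * beta)%R * a (S n))%C.

Lemma is_Cpseries_Abeta (beta : R) (a : nat -> C) (z F D : C) : a O = 0%C -> z <> 0%C ->
  is_Cpseries a z F -> is_Cpseries (Cpseries_diff a) z D ->
  is_Cpseries (Abeta_coef beta a) z (beta * (F / z) + (1 - beta)%R * D).
Proof.
  intros Ha0 Hz HF HD.
  assert (Hdiv : is_Cpseries (fun n => a (S n)) z (F / z)).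
  { pose proof (is_Cseries_scal (/ z) _ _ (is_Cseries_incr_1 _ _ HF)) as H.
    cbv beta in H. rewrite Ha0 in H.
    replace (F / z)%C with (/ z * (F - 0 * z ^ O))%C by (field; exact Hz).
    revert H. apply is_Cseries_ext. intros n. rewrite Cpow_S. field. exact Hz. }
  pose proof (is_Cseries_plus _ _ _ _ (is_Cseries_scal beta _ _ Hdiv)
                (is_Cseries_scal (1 - beta)%R _ _ HD)) as H.
  revert H. apply is_Cseries_ext. intros n. unfold Abeta_coef, Cpseries_diff.
  rewrite S_INR, !RtoC_minus, !RtoC_plus, RtoC_mult. ring.
Qed.

Lemma classA_beta_caratheodory (beta : R) (f : C -> C) (a : nat -> C) :
  classA_beta beta f -> taylor_on_disk f a ->
  Cmod (Abeta_coef beta a 2 - Abeta_coef beta a 1 * Abeta_coef beta a 1 / 2)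
  <= 2 - Cmod (Abeta_coef beta a 1) ^ 2 / 2.
Proof.
  intros [HA Hpos] Ht.
  assert (Hf : forall w, Cmod w < 1 -> is_Cpseries a w (f w))
    by (intros w Hw; apply is_pseries_Cpseries, Ht, Hw).
  destruct (classA_coef_0_1 f a HA Hf) as [Ha0 Ha1].
  assert (Hp : forall z, Cmod z < 1 -> z <> 0%C -> forall d, cderiv f z d ->
    is_Cpseries (Abeta_coef beta a) z (beta * (f z / z) + (1 - beta)%R * d))
    by (intros z Hz Hz0 d Hd; apply is_Cpseries_Abeta; auto;
        apply (cderiv_Cpseries f a z d Hf Hz Hd)).
  apply (caratheodory_second_coef _ (Cpseries_sum (Abeta_coef beta a))).
  - unfold Abeta_coef. rewrite Ha1. simpl. apply injective_projections; simpl; ring.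
  - intros z Hz. destruct (Ceq_dec z 0) as [->|Hz0].
    + rewrite (Cpseries_sum_unique _ _ _ (is_Cpseries_0 _)). apply is_Cpseries_0.
    + destruct (proj1 HA z Hz) as [d Hd].
      rewrite (Cpseries_sum_unique _ _ _ (Hp z Hz Hz0 d Hd)). apply Hp; auto.
  - intros z Hz Hz0. destruct (proj1 HA z Hz) as [d Hd].
    rewrite (Cpseries_sum_unique _ _ _ (Hp z Hz Hz0 d Hd)).
    apply Rlt_le, Hpos; auto.
Qed.

Lemma inverse_coef2_bound (beta : R) (c1 c2 : C) : 0 <= beta <= 1 ->
  Cmod (c2 - c1 * c1 / 2) <= 2 - Cmod c1 ^ 2 / 2 ->
  Cmod (- (c1 / (2 - beta)%R)) <= 2 / (2 - beta).
Proof.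
  intros Hb H. pose proof (Cmod_ge_0 (c2 - c1 * c1 / 2)). pose proof (Cmod_ge_0 c1).
  rewrite Cmod_opp, Cmod_div, Cmod_R, Rabs_pos_eq by (lra || (intros E; injection E; lra)).
  apply Rmult_le_compat_r; [apply Rlt_le, Rinv_0_lt_compat; lra | nra].
Qed.

Lemma inverse_coef3_real_bound (beta x d : R) :
  0 <= beta <= 1 -> 0 <= d -> d <= 2 - x ^ 2 / 2 ->
  d / (3 - 2 * beta) + (2 / (2 - beta) ^ 2 - 1 / (2 * (3 - 2 * beta))) * x ^ 2
  <= 2 * (8 - 4 * beta - beta ^ 2) / ((2 - beta) ^ 2 * (3 - 2 * beta)).
Proof.
  intros Hb Hd H.
  assert (Hp : 0 < (2 - beta) ^ 2 * (3 - 2 * beta))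
    by (apply Rmult_lt_0_compat; [apply pow_lt|]; lra).
  apply (Rmult_le_reg_r ((2 - beta) ^ 2 * (3 - 2 * beta))); [exact Hp|].
  replace ((d / (3 - 2 * beta) + (2 / (2 - beta) ^ 2 - 1 / (2 * (3 - 2 * beta))) * x ^ 2)
           * ((2 - beta) ^ 2 * (3 - 2 * beta)))
    with ((2 - beta) ^ 2 * d + (2 * (3 - 2 * beta) - (2 - beta) ^ 2 / 2) * x ^ 2) by (field; lra).
  replace (2 * (8 - 4 * beta - beta ^ 2) / ((2 - beta) ^ 2 * (3 - 2 * beta))
           * ((2 - beta) ^ 2 * (3 - 2 * beta)))
    with (2 * (8 - 4 * beta - beta ^ 2)) by (field; lra).
  assert (H1 : (2 - beta) ^ 2 * d <= (2 - beta) ^ 2 * (2 - x ^ 2 / 2))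
    by (apply Rmult_le_compat_l; [apply pow2_ge_0 | exact H]).
  assert (H2 : (2 - beta ^ 2) * x ^ 2 <= (2 - beta ^ 2) * 4)
    by (apply Rmult_le_compat_l; simpl; nra).
  nra.
Qed.

Lemma inverse_coef3_bound (beta : R) (c1 c2 : C) : 0 <= beta <= 1 ->
  Cmod (c2 - c1 * c1 / 2) <= 2 - Cmod c1 ^ 2 / 2 ->
  Cmod (- (c2 / (3 - 2 * beta)%R) + 2 * (c1 / (2 - beta)%R * (c1 / (2 - beta)%R)))
  <= 2 * (8 - 4 * beta - beta ^ 2) / ((2 - beta) ^ 2 * (3 - 2 * beta)).
Proof.
  intros Hb H.
  set (kappa := 2 / (2 - beta) ^ 2 - 1 / (2 * (3 - 2 * beta))).
  assert (Hk : 0 <= kappa).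
  { replace kappa with ((8 - 4 * beta - beta ^ 2) / (2 * (2 - beta) ^ 2 * (3 - 2 * beta)))
      by (unfold kappa; field; lra).
    apply Rdiv_le_0_compat; [simpl; nra|].
    apply Rmult_lt_0_compat; [apply Rmult_lt_0_compat; [lra | apply pow_lt; lra] | lra]. }
  replace (- (c2 / (3 - 2 * beta)%R) + 2 * (c1 / (2 - beta)%R * (c1 / (2 - beta)%R)))%C
    with ((- 1 / (3 - 2 * beta))%R * (c2 - c1 * c1 / 2) + kappa * (c1 * c1))%C.
  2:{ unfold kappa. destruct c1 as [x1 y1], c2 as [x2 y2].
      apply injective_projections; simpl; field; lra. }
  eapply Rle_trans; [apply Cmod_triangle|].
  rewrite !Cmod_mult, !Cmod_R, (Rabs_pos_eq kappa) by exact Hk.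
  replace (Rabs (-1 / (3 - 2 * beta))) with (1 / (3 - 2 * beta))
    by (rewrite Rabs_left; [field | apply Rdiv_neg_pos]; lra).
  pose proof (Cmod_ge_0 (c2 - c1 * c1 / 2)).
  replace (1 / (3 - 2 * beta) * Cmod (c2 - c1 * c1 / 2) + kappa * (Cmod c1 * Cmod c1))
    with (Cmod (c2 - c1 * c1 / 2) / (3 - 2 * beta) + kappa * Cmod c1 ^ 2) by (field; lra).
  apply inverse_coef3_real_bound; assumption.
Qed.

Lemma classA_beta_inverse_coef_bounds (beta : R) (f : C -> C) (a : nat -> C) : 0 <= beta <= 1 ->
  classA_beta beta f -> taylor_on_disk f a ->
  Cmod (invA2 a) <= 2 / (2 - beta) /\
  Cmod (invA3 a) <= 2 * (8 - 4 * beta - beta ^ 2) / ((2 - beta) ^ 2 * (3 - 2 * beta)).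
Proof.
  intros Hb Hf Ht. pose proof (classA_beta_caratheodory beta f a Hf Ht) as Hc.
  assert (Ha2 : a 2%nat = (Abeta_coef beta a 1 / (2 - beta)%R)%C).
  { unfold Abeta_coef. replace (INR 2 - INR 1 * beta) with (2 - beta) by (simpl; ring).
    field. intros E; injection E; lra. }
  assert (Ha3 : a 3%nat = (Abeta_coef beta a 2 / (3 - 2 * beta)%R)%C).
  { unfold Abeta_coef. replace (INR 3 - INR 2 * beta) with (3 - 2 * beta) by (simpl; ring).
    field. intros E; injection E; lra. }
  unfold invA2, invA3. rewrite Ha2, Ha3. split.
  - apply (inverse_coef2_bound beta _ (Abeta_coef beta a 2)); assumption.
  - apply inverse_coef3_bound; assumption.
Qed.

(** * The extremal function *)

(* The coefficients for which beta f(z)/z + (1 - beta) f'(z) = (1 + z)/(1 - z). *)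
Definition extremal_coef (beta : R) (n : nat) : C :=
  match n with
  | O => 0%C
  | S k => RtoC ((if Nat.eqb k 0 then 1 else 2) / (INR (S k) - INR k * beta))
  end.

Definition extremal_fun (beta : R) : C -> C := Cpseries_sum (extremal_coef beta).

Lemma Abeta_denominator_ge_1 (beta : R) (k : nat) : 0 <= beta <= 1 -> 1 <= INR (S k) - INR k * beta.
Proof. intros Hb. rewrite S_INR. pose proof (pos_INR k). nra. Qed.

Lemma Abeta_coef_extremal (beta : R) (n : nat) : 0 <= beta <= 1 ->
  Abeta_coef beta (extremal_coef beta) n = RtoC (if Nat.eqb n 0 then 1 else 2).
Proof.
  intros Hb. unfold Abeta_coef, extremal_coef. rewrite <- RtoC_mult. f_equal.
  pose proof (Abeta_denominator_ge_1 beta n Hb). field. lra.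
Qed.

Lemma Cmod_extremal_coef_le (beta : R) (n : nat) :
  0 <= beta <= 1 -> Cmod (extremal_coef beta n) <= 2.
Proof.
  intros Hb. destruct n as [|k]; cbn [extremal_coef]; [rewrite Cmod_0; lra|].
  pose proof (Abeta_denominator_ge_1 beta k Hb).
  rewrite Cmod_R, Rabs_pos_eq by (apply Rdiv_le_0_compat; [destruct (Nat.eqb k 0)|]; lra).
  apply Rmult_le_reg_r with (INR (S k) - INR k * beta); [lra|].
  unfold Rdiv. rewrite Rmult_assoc, Rinv_l by lra. destruct (Nat.eqb k 0); lra.
Qed.

Lemma extremal_fun_pseries (beta : R) (z : C) : 0 <= beta <= 1 -> Cmod z < 1 ->
  is_Cpseries (extremal_coef beta) z (extremal_fun beta z).
Proof.
  intros Hb Hz. destruct (ex_Cseries_le (fun n => extremal_coef beta n * z ^ n)%C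
                            (fun n => 2 * Cmod z ^ n)) as [l Hl].
  - intros n. rewrite Cmod_mult, Cmod_pow.
    apply Rmult_le_compat_r; [apply pow_le, Cmod_ge_0 | apply Cmod_extremal_coef_le, Hb].
  - apply (ex_series_scal_l 2 (fun n => Cmod z ^ n)), ex_series_geom.
    rewrite Rabs_pos_eq; [exact Hz | apply Cmod_ge_0].
  - unfold extremal_fun. rewrite (Cpseries_sum_unique _ _ _ Hl). exact Hl.
Qed.

Lemma is_Cpseries_Cayley (z : C) : Cmod z < 1 ->
  is_Cpseries (fun n => RtoC (if Nat.eqb n 0 then 1 else 2)) z ((1 + z) / (1 - z)).
Proof.
  intros Hz.
  assert (Hz1 : (1 - z)%C <> 0%C).
  { intros E. assert (z = 1%C) by (replace z with (1 - (1 - z))%C by ring; rewrite E; ring).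
    subst. rewrite Cmod_1 in Hz. lra. }
  pose proof (is_Cseries_minus _ _ _ _ (is_Cseries_scal 2 _ _ (is_Cseries_geom z Hz))
                (is_Cseries_indicator 0 1%C)) as H.
  replace ((1 + z) / (1 - z))%C with (2 * / (1 - z) - 1)%C by (field; exact Hz1).
  revert H. apply is_Cseries_ext. intros [|n]; simpl; ring.
Qed.

Lemma Re_Cayley_pos (z : C) : Cmod z < 1 -> 0 < Re ((1 + z) / (1 - z)).
Proof.
  intros Hz. destruct z as [x y].
  assert (H : x * x + y * y < 1).
  { unfold Cmod in Hz. simpl in Hz. rewrite !Rmult_1_r in Hz.
    rewrite <- (sqrt_sqrt (x * x + y * y)) by nra. pose proof (sqrt_pos (x * x + y * y)). nra. }
  assert (HD : 0 < (1 - x) * (1 - x) + y * y) by nra.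
  unfold Cdiv, Cinv, Cmult, Cplus, Cminus, Copp, Re. simpl.
  replace ((1 + x) * ((1 + - x) / ((1 + - x) * ((1 + - x) * 1) + (0 + - y) * ((0 + - y) * 1)))
           - (0 + y) * (- (0 + - y) / ((1 + - x) * ((1 + - x) * 1) + (0 + - y) * ((0 + - y) * 1))))
    with ((1 - x * x - y * y) / ((1 - x) * (1 - x) + y * y)) by (field; nra).
  apply Rdiv_lt_0_compat; lra.
Qed.

Lemma extremal_fun_classA_beta (beta : R) : 0 <= beta <= 1 ->
  classA_beta beta (extremal_fun beta) /\ taylor_on_disk (extremal_fun beta) (extremal_coef beta).
Proof.
  intros Hb.
  assert (Hf : forall z, Cmod z < 1 -> is_Cpseries (extremal_coef beta) z (extremal_fun beta z))
    by (intros z; apply extremal_fun_pseries, Hb).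
  assert (H0 : Cmod 0 < 1) by (rewrite Cmod_0; lra).
  split; [split; [split; [|split]|] |].
  - intros z Hz. destruct (is_derive_Cpseries _ _ Hf z Hz) as [D [_ HD]]. exists D. exact HD.
  - exact (Cpseries_sum_unique _ _ _ (is_Cpseries_0 _)).
  - destruct (is_derive_Cpseries _ _ Hf 0 H0) as [D [HD HdD]].
    replace (RtoC 1) with D; [exact HdD|].
    rewrite <- (is_Cseries_unique _ _ _ (is_Cpseries_0 _) HD).
    unfold Cpseries_diff. simpl. apply injective_projections; simpl; field.
  - intros z d Hz Hz0 Hd.
    pose proof (is_Cpseries_Abeta beta _ z _ d eq_refl Hz0 (Hf z Hz)
                  (cderiv_Cpseries _ _ z d Hf Hz Hd)) as H.
    rewrite (is_Cseries_unique _ _ ((1 + z) / (1 - z))%C H).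
    + apply Re_Cayley_pos, Hz.
    + refine (is_Cseries_ext _ _ _ _ (is_Cpseries_Cayley z Hz)).
      intros n. rewrite Abeta_coef_extremal by exact Hb. reflexivity.
  - intros z Hz. apply is_pseries_Cpseries, Hf, Hz.
Qed.

Lemma extremal_inverse_coefs (beta : R) : 0 <= beta <= 1 ->
  Cmod (invA2 (extremal_coef beta)) = 2 / (2 - beta) /\
  Cmod (invA3 (extremal_coef beta))
    = 2 * (8 - 4 * beta - beta ^ 2) / ((2 - beta) ^ 2 * (3 - 2 * beta)).
Proof.
  intros Hb. unfold invA2, invA3.
  change (extremal_coef beta 2) with (RtoC (2 / (INR 2 - INR 1 * beta))).
  change (extremal_coef beta 3) with (RtoC (2 / (INR 3 - INR 2 * beta))).
  replace (INR 2 - INR 1 * beta) with (2 - beta) by (simpl; ring).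
  replace (INR 3 - INR 2 * beta) with (3 - 2 * beta) by (simpl; ring).
  split.
  - rewrite Cmod_opp, Cmod_R, Rabs_pos_eq by (apply Rdiv_le_0_compat; lra). reflexivity.
  - replace (- RtoC (2 / (3 - 2 * beta)) + 2 * (RtoC (2 / (2 - beta)) * RtoC (2 / (2 - beta))))%C
      with (RtoC (2 * (8 - 4 * beta - beta ^ 2) / ((2 - beta) ^ 2 * (3 - 2 * beta))))
      by (apply injective_projections; simpl; field; lra).
    rewrite Cmod_R, Rabs_pos_eq; [reflexivity|].
    apply Rdiv_le_0_compat; [simpl; nra | apply Rmult_lt_0_compat; [apply pow_lt|]; lra].
Qed.

Theorem theorem2p2 (beta : R) (hb0 : 0 <= beta) (hb1 : beta <= 1) :
  (forall (f : C -> C) (a : nat -> C),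
     classA_beta beta f -> taylor_on_disk f a ->
     Cmod (invA2 a) <= 2 / (2 - beta) /\
     Cmod (invA3 a) <= 2 * (8 - 4 * beta - beta ^ 2)
                        / ((2 - beta) ^ 2 * (3 - 2 * beta))) /\
  (exists (f : C -> C) (a : nat -> C),
     classA_beta beta f /\ taylor_on_disk f a /\
     Cmod (invA2 a) = 2 / (2 - beta)) /\
  (exists (f : C -> C) (a : nat -> C),
     classA_beta beta f /\ taylor_on_disk f a /\
     Cmod (invA3 a) = 2 * (8 - 4 * beta - beta ^ 2)
                        / ((2 - beta) ^ 2 * (3 - 2 * beta))).
Proof.
  assert (Hb : 0 <= beta <= 1) by (split; assumption).
  destruct (extremal_fun_classA_beta beta Hb) as [Hf Ht].
  destruct (extremal_inverse_coefs beta Hb) as [HA2 HA3].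
  split; [|split].
  - intros f a. apply classA_beta_inverse_coef_bounds, Hb.
  - exists (extremal_fun beta), (extremal_coef beta). auto.
  - exists (extremal_fun beta), (extremal_coef beta). auto.
Qed.
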